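(* Let $\sigma=\{\sigma_i\mid i\in I\}$ be a partition of the set of all primes, let $G$ be a finite group and let $N$ be a normal subgroup of $G$. If $\mathcal{H}=\{H_1,\ldots,H_t\}$ is a generalized Wielandt $\sigma$-set of $G$, then $\mathcal{H}_0=\{H_1N/N,\ldots,H_tN/N\}$ is a generalized Wielandt $\sigma$-set of $G/N$.
   Context: All groups are finite. $\sigma=\{\sigma_i\mid i\in I\}$ is a partition of the set $\mathbb{P}$ of primes. For $n\in\mathbb{N}$, $\sigma(n)=\{\sigma_i\mid \sigma_i\cap\pi(n)\ne\emptyset\}$ with $\pi(n)$ the primes dividing $n$; $\sigma(G)=\sigma(|G|)$, $\pi(G)=\pi(|G|)$. A group is $\sigma$-primary if $|\sigma(G)|\le1$ and $\sigma$-nilpotent if it is a direct product of $\sigma$-primary groups. A Hall $\sigma_i$-subgroup of $G$ is a subgroup whose order has all prime divisors in $\sigma_i$ and whose index has none in $\sigma_i$. A complete Hall $\sigma$-set of $G$ is a set $\mathcal{H}$ of subgroups such that every nontrivial member is a Hall $\sigma_i$-subgroup of $G$ for some $i$ and $\mathcal{H}$ contains exactly one Hall $\sigma_i$-subgroup of $G$ for each $\sigma_i\in\sigma(G)$. $G^{\mathfrak{N}_\sigma}$ is the intersection of all normal subgroups $M$ of $G$ with $G/M$ $\sigma$-nilpotent. For a set of primes $\pi$, a group is $\pi$-supersoluble if each of its chief factors is either cyclic of prime order in $\pi$ or a $\pi'$-group. A complete Hall $\sigma$-set $\mathcal{H}$ of $G$ is a generalized Wielandt $\sigma$-set of $G$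 if every member of $\mathcal{H}$ is $\pi(G^{\mathfrak{N}_\sigma})$-supersoluble. *)

From mathcomp Require Import all_boot all_fingroup all_solvable.
Set Implicit Arguments. Unset Strict Implicit. Unset Printing Implicit Defensive.
Local Open Scope group_scope.

(* A partition sigma = {sigma_i | i in I} of the primes is encoded by a map
   s : nat -> I assigning to each prime p the index i of the block sigma_i
   containing it; sigma_i = [pred p | s p == i] (restricted to primes). *)

Section SigmaDefs.
Variables (I : eqType) (s : nat -> I).

Definition sigma_i (i : I) : nat_pred := [pred p | s p == i].

Definition in_sigma_of (n : nat) (i : I) : bool := has (fun p => s p == i) (primes n).

Definition sigma_primary (gT : finGroupType) (G : {set gT}) : bool :=
  all (fun p => all (fun q => s p == s q) (primes #|G|)) (primes #|G|).

Definition sigma_nilpotent (gT : finGroupType) (G : {set gT}) : bool :=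
  [exists P : {set {group gT}},
     ((\big[dprod/1]_(H in P) (H : {set gT})) == G) &&
     [forall H in P, sigma_primary H]].

Definition sigma_residual (gT : finGroupType) (G : {set gT}) : {set gT} :=
  \bigcap_(M : {group gT} | (M <| G) && sigma_nilpotent (G / M)) M.

Definition sigma_Hall (gT : finGroupType) (i : I) (G H : {set gT}) : bool := (sigma_i i).-Hall(G) H.

Definition complete_Hall_sigma_set (gT : finGroupType) (G : {set gT}) (HH : {set {group gT}}) : Prop :=
  (forall H : {group gT}, H \in HH -> H :!=: 1 -> exists i, sigma_Hall i G H) /\
  (forall i, in_sigma_of #|G| i ->
     exists! H : {group gT}, H \in HH /\ sigma_Hall i G H).

End SigmaDefs.

Definition pi_supersoluble (pi : nat_pred) (gT : finGroupType) (G : {set gT}) : Prop :=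
  forall U V : {group gT}, chief_factor G V U ->
    (cyclic (U / V) && prime #|U / V| && (#|U / V| \in pi)) || pi^'.-group (U / V).

Definition gen_Wielandt_sigma_set (I : eqType) (s : nat -> I) (gT : finGroupType)
    (G : {set gT}) (HH : {set {group gT}}) : Prop :=
  complete_Hall_sigma_set s G HH /\
  (forall H : {group gT}, H \in HH -> pi_supersoluble \pi(sigma_residual s G) H).

From mathcomp Require Import all_boot all_fingroup all_solvable.
Set Implicit Arguments. Unset Strict Implicit. Unset Printing Implicit Defensive.
Local Open Scope group_scope.

(* Images of Hall sigma_i-subgroups in G/N are Hall sigma_i-subgroups, and a
   nontrivial group is a sigma_i-group for at most one i; this carries the
   complete Hall sigma-set over to G/N.  Chief factors of H/N pull back to chief
   factors of H of the same order, so H/N is pi-supersoluble whenever H is, and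
   pi-supersolubility passes to subsets of pi; it therefore suffices that
   pi((G/N)^{N_sigma}) is contained in pi(G^{N_sigma}).  For M normal in G, G/M
   is sigma-nilpotent iff for every i it has a normal Hall sigma_i- and a normal
   Hall sigma_i'-subgroup, a condition on indices of normal subgroups of G
   between M and G that survives intersecting two such M and taking images.
   Hence G/G^{N_sigma} is sigma-nilpotent, and so is its image, which gives
   (G/N)^{N_sigma} <= G^{N_sigma}N/N. *)

Definition has_normal_Hall (pi : nat_pred) (gT : finGroupType) (G : {set gT}) : Prop :=
  exists2 H : {group gT}, pi.-Hall(G) H & H <| G.

(* G/M has a normal Hall pi-subgroup, stated without forming the quotient. *)
Definition normal_Hall_mod (pi : nat_pred) (gT : finGroupType) (G M : {set gT}) : Prop :=
  exists K : {group gT},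
    [/\ M \subset K, K <| G, pi.-nat #|K : M| & pi^'.-nat #|G : K|].

Section NormalHall.

Variable gT : finGroupType.
Implicit Types (pi : nat_pred) (A B G H M : {group gT}).

Lemma norm_indexSg A B H :
  A \subset B -> B \subset 'N(H) -> #|A : H| %| #|B : H|.
Proof.
move=> sAB nHB; rewrite -!card_quotient ?(subset_trans sAB) //.
exact/cardSg/quotientS.
Qed.

Lemma pHall_ntrivg pi p G H :
  p \in \pi(G) -> p \in pi -> pi.-Hall(G) H -> H :!=: 1.
Proof.
move=> piGp pi_p /and3P[_ _]; apply: contraTneq => ->.
by rewrite indexg1; apply/negP => /pnatPpi/(_ piGp); rewrite inE /= pi_p.
Qed.

Lemma bigdprod_pgroup pi (P : pred {group gT}) (F : {group gT} -> {set gT}) G :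
  \big[dprod/1]_(H | P H) F H = G ->
  (forall H, P H -> pi.-group (F H)) -> pi.-group G.
Proof.
move=> defG piF; rewrite /pgroup -(bigdprod_card defG).
by apply: (big_ind (pnat pi)) => // m n piM piN; rewrite pnatM piM.
Qed.

Lemma normal_Hall_dprod pi G A B :
  pi.-Hall(G) A -> pi^'.-Hall(G) B -> A <| G -> B <| G -> A \x B = G.
Proof.
move=> hallA hallB nsAG nsBG.
have /sdprodP[_ defG _ tiAB] := sdprod_normal_p'HallP nsAG hallB hallA.
rewrite dprodE ?defG //; apply/commG1P/trivgP; rewrite -tiAB setIC commg_subI //.
  by rewrite subsetI subxx (subset_trans (normal_sub nsBG) (normal_norm nsAG)).
by rewrite subsetI subxx (subset_trans (normal_sub nsAG) (normal_norm nsBG)).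
Qed.

Lemma has_normal_Hall_normal pi G M :
  has_normal_Hall pi G -> M <| G -> has_normal_Hall pi M.
Proof.
case=> H hallH nsHG nsMG; exists (H :&: M)%G; first exact: Hall_setI_normal hallH.
exact: normalS (subsetIr _ _) (normal_sub nsMG) (normalI nsHG nsMG).
Qed.

Lemma normal_Hall_quotientP pi G M :
  M <| G -> has_normal_Hall pi (G / M) <-> normal_Hall_mod pi G M.
Proof.
move=> nsMG; have nMG := normal_norm nsMG.
split=> [[A hallA nsAGM] | [K [sMK nsKG piKM pi'GK]]].
  have [sAGM piA pi'GMA] := and3P hallA.
  exists (coset M @*^-1 A)%G; split.
  - by rewrite -{1}(ker_coset M) ker_sub_pre.
  - by rewrite -(quotientGK nsMG) morphpre_normal ?(subset_trans sAGM) ?morphimS.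
  - by rewrite -card_quotient ?subsetIl //= cosetpreK.
  - by rewrite -{1}(quotientGK nsMG) index_morphpre ?(subset_trans sAGM) ?morphimS.
have sKG := normal_sub nsKG.
exists (K / M)%G; last exact: quotient_normal.
rewrite /pHall quotientS //= /pgroup card_quotient ?(subset_trans sKG) //.
by rewrite index_quotient_eq ?piKM ?subIset ?sMK ?orbT.
Qed.

Lemma normal_Hall_modI pi G M1 M2 :
  M1 <| G -> M2 <| G -> normal_Hall_mod pi G M1 -> normal_Hall_mod pi G M2 ->
  normal_Hall_mod pi G (M1 :&: M2).
Proof.
move=> /andP[_ nM1G] /andP[_ nM2G].
move=> [K1 [sMK1 nsK1G piK1 pi'G1]] [K2 [sMK2 nsK2G piK2 pi'G2]].
have [[sK1G nK1G] [sK2G nK2G]] := (andP nsK1G, andP nsK2G).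
exists (K1 :&: K2)%G; split=> /=.
- exact: setISS.
- exact: normalI.
- have sM12_KM1 : M1 :&: M2 \subset K1 :&: K2 :&: M1.
    by rewrite subsetI subsetIl setISS.
  rewrite -(Lagrange_index (subsetIl _ M1) sM12_KM1) /= pnatM indexgI.
  have -> : M1 :&: M2 = K1 :&: K2 :&: M1 :&: M2.
    by apply/eqP; rewrite eqEsubset subsetI sM12_KM1 subsetIr setSI ?subsetIr.
  rewrite indexgI (pnat_dvd _ piK1) ?(pnat_dvd _ piK2) ?norm_indexSg ?subsetIl //.
  + exact: subset_trans (subsetIl _ _) (subsetIr _ _).
  + exact: subset_trans sK2G nM2G.
  exact: subset_trans sK1G nM1G.
- rewrite -(Lagrange_index sK1G (subsetIl K1 K2)) pnatM pi'G1 indexgI.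
  exact: pnat_dvd (norm_indexSg sK1G nK2G) pi'G2.
Qed.

End NormalHall.

Lemma chief_factor_norm (gT : finGroupType) (G : {set gT}) (U V : {group gT}) :
  chief_factor G V U -> U \subset 'N(V).
Proof.
by case/andP=> /maxgroupp/andP[_ nVG] /andP[sUG _]; apply: subset_trans sUG nVG.
Qed.

Lemma pi_supersolubleP (pi : nat_pred) (gT : finGroupType) (G : {set gT}) :
  pi_supersoluble pi G <->
  (forall U V : {group gT}, chief_factor G V U ->
     prime #|U : V| && (#|U : V| \in pi) || pi^'.-nat #|U : V|).
Proof.
have factorE (U V : {group gT}) : chief_factor G V U ->
    (cyclic (U / V) && prime #|U / V| && (#|U / V| \in pi)) || pi^'.-group (U / V)
  = prime #|U : V| && (#|U : V| \in pi) || pi^'.-nat #|U : V|.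
  move/chief_factor_norm=> nVU; rewrite /pgroup -card_quotient //.
  by case: (boolP (prime _)) => [/prime_cyclic-> | _]; rewrite ?andbF.
by split=> supG U V chiefUV; [rewrite -factorE | rewrite factorE] => //; apply: supG.
Qed.

Lemma sub_pi_supersoluble (pi rho : nat_pred) (gT : finGroupType) (G : {set gT}) :
  {subset rho <= pi} -> pi_supersoluble pi G -> pi_supersoluble rho G.
Proof.
move=> rho_pi /pi_supersolubleP supG; apply/pi_supersolubleP => U V /supG.
case/orP=> [/andP[prUV _] | pi'UV].
  case: (boolP (_ \in rho)) => [_ | rho'UV]; first by rewrite prUV.
  by rewrite pnatE // inE /= rho'UV orbT.
by rewrite (sub_in_pnat _ pi'UV) ?orbT // => p _; apply: contra (rho_pi p).
Qed.

Section Morphim.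

Variables (gT rT : finGroupType) (D : {group gT}) (f : {morphism D >-> rT}).

Lemma normal_Hall_mod_morphim (pi : nat_pred) (G M : {group gT}) :
  G \subset D -> normal_Hall_mod pi G M -> normal_Hall_mod pi (f @* G) (f @* M).
Proof.
move=> sGD [K [sMK nsKG piKM pi'GK]].
have sKD := subset_trans (normal_sub nsKG) sGD.
exists (f @* K)%G; split.
- exact: morphimS.
- exact: morphim_normal.
- by apply: pnat_dvd piKM; rewrite index_morphim ?subIset ?sKD.
- exact: morphim_p_index.
Qed.

Lemma morphpre_im_dom : f @*^-1 (f @* D) = D.
Proof. by rewrite -[f @* D]setIT morphpreIim morphpreT. Qed.

Lemma morphpre_maxnormal (U V : {group rT}) :
  U \subset f @* D -> maxnormal V U (f @* D) ->
  maxnormal (f @*^-1 V) (f @*^-1 U) D.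
Proof.
move=> sUfD /maxgroupP[/andP[ltVU nVfD] maxV].
have sVfD := subset_trans (proper_sub ltVU) sUfD.
apply/maxgroupP; split.
  by rewrite morphpre_proper //= ltVU -{1}morphpre_im_dom morphpre_norms.
move=> K /andP[ltKU nKD] sVK.
have sKD : K \subset D := subset_trans (proper_sub ltKU) (subsetIl _ _).
have defK : f @*^-1 (f @* K) = K.
  exact: morphimGK (subset_trans (ker_sub_pre f V) sVK) sKD.
rewrite -defK; congr (f @*^-1 _); apply: (maxV (f @* K)%G).
  by rewrite -(morphpre_proper _ sUfD) ?morphimS // defK ltKU morphim_norms.
by rewrite -(morphpreK sVfD) morphimS.
Qed.

Lemma morphpre_chief_factor (U V : {group rT}) :
  chief_factor (f @* D) V U -> chief_factor D (f @*^-1 V) (f @*^-1 U).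
Proof.
case/andP=> maxV nsUfD; have sUfD := normal_sub nsUfD.
rewrite /chief_factor morphpre_maxnormal //=.
by have := morphpre_normal sUfD (subxx _); rewrite morphpre_im_dom nsUfD => ->.
Qed.

Lemma morphim_pi_supersoluble (pi : nat_pred) :
  pi_supersoluble pi D -> pi_supersoluble pi (f @* D).
Proof.
move=> /pi_supersolubleP supD; apply/pi_supersolubleP => U V chiefUV.
rewrite -(@index_morphpre _ _ _ f) ?normal_sub //; last by case/andP: chiefUV.
exact/supD/morphpre_chief_factor.
Qed.

End Morphim.

Lemma quotient_pi_supersoluble (pi : nat_pred) (gT : finGroupType) (H N : {group gT}) :
  H \subset 'N(N) -> pi_supersoluble pi H -> pi_supersoluble pi (H / N).
Proof.
move=> nNH /(morphim_pi_supersoluble (f := restrm nNH (coset N))).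
by rewrite morphim_restrm setIid.
Qed.

Section SigmaNilpotent.

Variables (I : eqType) (s : nat -> I).
Local Notation sg i := (sigma_i s i).

Lemma pgroup_sigma_primary (gT : finGroupType) (A : {group gT}) i :
  (sg i).-group A -> sigma_primary s A.
Proof.
move=> piA; apply/allP => p piAp; apply/allP => q piAq.
by move: (pnatPpi piA piAp) (pnatPpi piA piAq); rewrite !inE => /eqP-> /eqP->.
Qed.

Lemma sigma_primary_pgroup (gT : finGroupType) (H : {group gT}) p :
  sigma_primary s H -> p \in \pi(H) -> (sg (s p)).-group H.
Proof.
move=> /allP primH piHp; rewrite /pgroup /pnat cardG_gt0.
by apply/allP => q piHq; rewrite inE eq_sym; apply: (allP (primH p piHp)).
Qed.

Lemma sigma_primary_p'group (gT : finGroupType) (H : {group gT}) i :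
  sigma_primary s H -> ~~ (sg i).-group H -> (sg i)^'.-group H.
Proof.
move=> primH pi'H; apply/pgroupP => p p_pr pH; rewrite !inE.
apply: contra pi'H => /eqP <-; apply: sigma_primary_pgroup primH _.
by rewrite mem_primes p_pr cardG_gt0.
Qed.

Lemma sigma_pgroup_eq (gT : finGroupType) (H : {group gT}) i j :
  (sg i).-group H -> (sg j).-group H -> H :!=: 1 -> i = j.
Proof.
move=> piH pjH ntH; have piHp : pdiv #|H| \in \pi(H) by rewrite pi_pdiv cardG_gt1.
by move: (pnatPpi piH piHp) (pnatPpi pjH piHp); rewrite !inE => /eqP<- /eqP.
Qed.

Lemma sigma_nilpotent1 (gT : finGroupType) : sigma_nilpotent s [1 gT].
Proof.
apply/existsP; exists set0; rewrite big_set0 eqxx.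
by apply/forallP => H; rewrite in_set0.
Qed.

Lemma sigma_nilpotent_normal_Hall (gT : finGroupType) (G : {group gT}) i :
  sigma_nilpotent s G -> has_normal_Hall (sg i) G /\ has_normal_Hall (sg i)^' G.
Proof.
case/existsP=> P /andP[/eqP defG /forallP primP].
rewrite (bigID (fun H : {group gT} => (sg i).-group H)) /= in defG.
have [[A B defA defB] _ _ _] := dprodP defG.
rewrite defA defB in defG; have [nsAG nsBG] := dprod_normal2 defG.
have piA : (sg i).-group A by apply: (bigdprod_pgroup defA) => H /andP[].
have pi'B : (sg i)^'.-group B.
  apply: (bigdprod_pgroup defB) => H /andP[PH]; apply: sigma_primary_p'group.
  by have := primP H; rewrite PH.
have [hallA hallB] := coprime_mulpG_Hall (dprodW defG) piA pi'B.
by split; [exists A | exists B].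
Qed.

Lemma normal_Hall_sigma_nilpotent (gT : finGroupType) (G : {group gT}) :
  (forall i, has_normal_Hall (sg i) G /\ has_normal_Hall (sg i)^' G) ->
  sigma_nilpotent s G.
Proof.
have [n] := ubnP #|G|; elim: n G => // n IHn G leGn hallG.
have [-> | ntG] := eqVneq G 1%G; first exact: sigma_nilpotent1.
have piGp : pdiv #|G| \in \pi(G) by rewrite pi_pdiv cardG_gt1.
have [[A hallA nsAG] [B hallB nsBG]] := hallG (s (pdiv #|G|)).
have defG := normal_Hall_dprod hallA hallB nsAG nsBG.
have ntA : A :!=: 1 by apply: pHall_ntrivg piGp _ hallA; rewrite inE.
have ltBn : #|B| < n.
  rewrite -ltnS (leq_trans _ leGn) // ltnS -(dprod_card defG).
  by rewrite ltn_Pmull ?cardG_gt1.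
have hallsB i : has_normal_Hall (sg i) B /\ has_normal_Hall (sg i)^' B.
  by have [hallGi hallGi'] := hallG i; split; apply: has_normal_Hall_normal nsBG.
have [PB /andP[/eqP defB /forallP primPB]] := existsP (IHn B ltBn hallsB).
have notPB_A : A \notin PB.
  apply: contraNN ntA => PB_A; have [_ _ _ tiAB] := dprodP defG.
  rewrite -subG1 -tiAB subsetI subxx -(bigdprodWY defB) sub_gen //.
  exact: (bigcup_sup A).
apply/existsP; exists (A |: PB); rewrite big_setU1 //= defB defG eqxx.
apply/forallP => H; apply/implyP => /setU1P[-> | PB_H].
  exact: pgroup_sigma_primary (pHall_pgroup hallA).
by have := primPB H; rewrite PB_H.
Qed.

Lemma sigma_nilpotent_quotientP (gT : finGroupType) (G M : {group gT}) :
  M <| G ->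
  sigma_nilpotent s (G / M) <->
  (forall i, normal_Hall_mod (sg i) G M /\ normal_Hall_mod (sg i)^' G M).
Proof.
move=> nsMG; split=> [snGM i | modGM].
  have [hallGi hallGi'] := sigma_nilpotent_normal_Hall i snGM.
  by split; apply/normal_Hall_quotientP.
apply: normal_Hall_sigma_nilpotent => i; have [modGi modGi'] := modGM i.
by split; apply/normal_Hall_quotientP.
Qed.

Lemma sigma_nilpotent_quotientI (gT : finGroupType) (G M1 M2 : {group gT}) :
  M1 <| G -> M2 <| G -> sigma_nilpotent s (G / M1) -> sigma_nilpotent s (G / M2) ->
  sigma_nilpotent s (G / (M1 :&: M2)).
Proof.
move=> nsM1G nsM2G /(sigma_nilpotent_quotientP nsM1G) mod1.
move=> /(sigma_nilpotent_quotientP nsM2G) mod2.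
apply/(sigma_nilpotent_quotientP (normalI nsM1G nsM2G)) => i.
by have [? ?] := mod1 i; have [? ?] := mod2 i; split; apply: normal_Hall_modI.
Qed.

Lemma morphim_sigma_nilpotent_quotient (gT rT : finGroupType) (D : {group gT})
    (f : {morphism D >-> rT}) (G M : {group gT}) :
  G \subset D -> M <| G -> sigma_nilpotent s (G / M) ->
  sigma_nilpotent s (f @* G / f @* M).
Proof.
move=> sGD nsMG /(sigma_nilpotent_quotientP nsMG) modGM.
apply/(sigma_nilpotent_quotientP (morphim_normal f nsMG)) => i.
by have [? ?] := modGM i; split; apply: normal_Hall_mod_morphim.
Qed.

Lemma sigma_residualP (gT : finGroupType) (G : {group gT}) :
  exists2 R : {group gT}, sigma_residual s G = R &
    (R <| G) && sigma_nilpotent s (G / R).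
Proof.
pose gP (M : {group gT}) := (M <| G) && sigma_nilpotent s (G / M).
have gPG : gP G by rewrite /gP normal_refl trivg_quotient sigma_nilpotent1.
have [R /mingroupP[gPR minR] _] := mingroup_exists gPG.
exists R => //; apply/eqP; rewrite eqEsubset (bigcap_inf R) //=.
apply/bigcapsP => M gPM; rewrite -(minR (R :&: M)%G) ?subsetIr ?subsetIl //.
have [/andP[nsRG snR] /andP[nsMG snM]] := (gPR, gPM).
by rewrite /gP normalI // sigma_nilpotent_quotientI.
Qed.

Lemma sigma_residual_quotient (gT : finGroupType) (G N : {group gT}) :
  N <| G -> sigma_residual s (G / N) \subset sigma_residual s G / N.
Proof.
move=> nsNG; have [R -> /andP[nsRG snR]] := sigma_residualP G.
apply: (bigcap_inf (R / N)%G); rewrite quotient_normal //=.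
exact: morphim_sigma_nilpotent_quotient (normal_norm nsNG) nsRG snR.
Qed.

Lemma pi_sigma_residual_quotient (gT : finGroupType) (G N : {group gT}) :
  N <| G -> {subset \pi(sigma_residual s (G / N)) <= \pi(sigma_residual s G)}.
Proof.
move=> nsNG; have subRN := sigma_residual_quotient nsNG.
have [R defR _] := sigma_residualP G; have [RN defRN _] := sigma_residualP (G / N).
rewrite defR defRN in subRN *.
exact: pi_of_dvd (dvdn_trans (cardSg subRN) (dvdn_quotient _ _)) (cardG_gt0 R).
Qed.

Lemma complete_Hall_sigma_set_sub (gT : finGroupType) (G H : {group gT}) HH :
  complete_Hall_sigma_set s G HH -> H \in HH -> H \subset G.
Proof.
case=> hallHH _ HH_H; have [-> | ntH] := eqVneq H 1%G; first exact: sub1G.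
by have [i /pHall_sub] := hallHH H HH_H ntH.
Qed.

Lemma complete_Hall_sigma_set_quotient (gT : finGroupType) (G N : {group gT}) HH :
  N <| G -> complete_Hall_sigma_set s G HH ->
  complete_Hall_sigma_set s (G / N) [set (H / N)%G | H in HH].
Proof.
move=> nsNG completeHH; have [hallHH uniqHH] := completeHH.
have hallQ i H : H \in HH -> sigma_Hall s i G H -> sigma_Hall s i (G / N) (H / N).
  move=> HH_H; apply: morphim_pHall.
  exact: subset_trans (complete_Hall_sigma_set_sub completeHH HH_H) (normal_norm nsNG).
split=> [_ /imsetP[H HH_H ->] ntHN | i /hasP[p GNp /eqP spi]].
  have ntH : H :!=: 1 by apply: contraNneq ntHN => /= ->; rewrite quotient1.
  by have [i hallH] := hallHH H HH_H ntH; exists i; apply: hallQ.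
have [|H [[HH_H hallH] uniqH]] := uniqHH i.
  apply/hasP; exists p; last by rewrite spi.
  exact: pi_of_dvd (dvdn_quotient G N) (cardG_gt0 G) p GNp.
exists (H / N)%G; split=> [|_ [/imsetP[K HH_K ->] hallKN]].
  by split; [apply: imset_f | apply: hallQ].
have ntKN : K / N != 1 by apply: pHall_ntrivg GNp _ hallKN; rewrite inE spi.
have ntK : K :!=: 1 by apply: contraNneq ntKN => /= ->; rewrite quotient1.
have [j hallK] := hallHH K HH_K ntK.
have sjKN := pHall_pgroup (hallQ _ _ HH_K hallK).
have ji := sigma_pgroup_eq sjKN (pHall_pgroup hallKN) ntKN.
by rewrite (uniqH K) // -ji.
Qed.

End SigmaNilpotent.

Theorem lemma3p2 (I : eqType) (s : nat -> I) (gT : finGroupType)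
    (G N : {group gT}) (HH : {set {group gT}}) :
  N <| G ->
  gen_Wielandt_sigma_set s G HH ->
  gen_Wielandt_sigma_set s (G / N) [set ((H <*> N) / N)%G | H : {group gT} in HH].
Proof.
move=> nsNG [completeHH supHH].
have nNHH H : H \in HH -> H \subset 'N(N).
  move=> HH_H; apply: subset_trans (normal_norm nsNG).
  exact: complete_Hall_sigma_set_sub completeHH HH_H.
have -> : [set ((H <*> N) / N)%G | H : {group gT} in HH] = [set (H / N)%G | H in HH].
  by apply: eq_in_imset => H /nNHH nNH; apply: group_inj; rewrite /= quotientYidr.
split; first exact: complete_Hall_sigma_set_quotient.
move=> _ /imsetP[H HH_H ->].
apply: sub_pi_supersoluble (pi_sigma_residual_quotient nsNG) _.
exact: quotient_pi_supersoluble (nNHH H HH_H) (supHH H HH_H).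
Qed.
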